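(* Let $\mathbb{M}=(a,b,[a],[b],[b^{-1}])$ be a Markov system of multiplicity $k$, and let $I_1,I_1',\dots,I_k,I_k'$, $b_1,\dots,b_k$ and $f_1=a\circ b_k\circ a\circ b_{k-1}\circ\cdots\circ a\circ b_1$ be as in the context. Then the stabilizer $\{g\in\mathbb{G}(\mathbb{M})\mid g(I_1)=I_1\}$ is infinite cyclic, generated by $f_1$.
   Context: A Markov system is a tuple $(a,b,[a],[b],[b^{-1}])$ with $a$ an orientation-preserving involution of $S^1$, $b$ an orientation-preserving homeomorphism of $S^1$ of period three, and $[a],[b],[b^{-1}]\subset S^1$ such that: (A) they are pairwise disjoint, each a union of $k$ disjoint closed intervals ($k\in\mathbb{N}$, the multiplicity); components are $a$-, $b$-, $b^{-1}$-intervals; $X=[a]\cup[b]\cup[b^{-1}]$; (B) no two $a$-intervals are consecutive among the components of $X$ in circular order; likewise for $b$- and for $b^{-1}$-intervals; with principal gaps (gaps of $X$ between an $a$-interval and a $b^{\pm1}$-interval), complementary gaps (between a $b$- and a $b^{-1}$-interval), $b$-blocks (maximal intervals made of $b^{\pm1}$-intervals and complementary gaps) and $[[b]]$ the union of $b$-blocks: (C) $a([a])=[[b]]$; (D) $b([a])=[b]$, $b([b])=[b^{-1}]$; (E) $a$ maps principal gaps to principal gaps and exactly one of $b^{\pm1}$ maps a given principal gap to a principal gap; the graph on principal gaps joining $J$ to $a(J)$ and to that image is connected. By (E) the principal gaps can be enumerated $I_1,I_1',I_2,I_2',\dots,I_k,I_k'$ so that for each $i$ there is $b_i\in\{b,b^{-1}\}$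 with $b_i(I_i)=I_i'$ and $a(I_i')=I_{i+1}$ (indices mod $k$). $\mathbb{G}(\mathbb{M})$ is the subgroup of $\mathrm{Homeo}_+(S^1)$ generated by $a$ and $b$. *)

From Stdlib Require Import Reals Lra Relations.
Open Scope R_scope.

(** The circle S^1 = R/Z, points represented by their representative in [0,1). *)
Definition S1 : Type := {x : R | 0 <= x < 1}.
Definition pt (x : S1) : R := proj1_sig x.

(** Counterclockwise cyclic order: y lies strictly between x and z going
    counterclockwise (positive direction) from x to z. *)
Definition cyc (x y z : S1) : Prop :=
  (pt x < pt y < pt z) \/ (pt y < pt z < pt x) \/ (pt z < pt x < pt y).

Definition cdist (x y : S1) : R :=
  Rmin (Rabs (pt x - pt y)) (1 - Rabs (pt x - pt y)).

Definition ccontinuous (f : S1 -> S1) : Prop :=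
  forall x eps, 0 < eps -> exists delta, 0 < delta /\
    forall y, cdist x y < delta -> cdist (f x) (f y) < eps.

Definition homeo_plus (f : S1 -> S1) : Prop :=
  ccontinuous f /\
  (exists g : S1 -> S1, (forall x, g (f x) = x) /\ (forall y, f (g y) = y)
                        /\ ccontinuous g) /\
  (forall x y z, cyc x y z -> cyc (f x) (f y) (f z)).

Definition img (f : S1 -> S1) (A : S1 -> Prop) : S1 -> Prop :=
  fun y => exists x, A x /\ f x = y.
Definition seteq (A B : S1 -> Prop) : Prop := forall x, A x <-> B x.

(** An arc is given by its two (distinct) endpoints (p,q), oriented
    counterclockwise from p to q. *)
Definition arc := (S1 * S1)%type.
Definition closed_arc (J : arc) : S1 -> Prop :=
  fun z => z = fst J \/ z = snd J \/ cyc (fst J) z (snd J).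
Definition open_arc (J : arc) : S1 -> Prop :=
  fun z => cyc (fst J) z (snd J).

(** The three kinds of components: a-, b-, b^{-1}-intervals. *)
Inductive kind := Ka | Kb | Kbi.

Section Markov.
Variables (k : nat) (comp : kind -> nat -> arc).

Definition inK (t : kind) (z : S1) : Prop :=
  exists i, (i < k)%nat /\ closed_arc (comp t i) z.
Definition inX (z : S1) : Prop := exists t, inK t z.

Definition consec (t : kind) (i : nat) (t' : kind) (j : nat) : Prop :=
  (i < k)%nat /\ (j < k)%nat /\ (t <> t' \/ i <> j) /\
  forall z, open_arc (snd (comp t i), fst (comp t' j)) z -> ~ inX z.

Definition gap_of (t : kind) (i : nat) (t' : kind) (j : nat) : arc :=
  (snd (comp t i), fst (comp t' j)).

Definition is_b_kind (t : kind) : Prop := t = Kb \/ t = Kbi.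

Definition principal (P : arc) : Prop :=
  exists t i t' j, consec t i t' j /\ P = gap_of t i t' j /\
    ((t = Ka /\ is_b_kind t') \/ (is_b_kind t /\ t' = Ka)).

Definition complementary (P : arc) : Prop :=
  exists t i t' j, consec t i t' j /\ P = gap_of t i t' j /\
    ((t = Kb /\ t' = Kbi) \/ (t = Kbi /\ t' = Kb)).

Definition inBB (z : S1) : Prop :=
  inK Kb z \/ inK Kbi z \/ exists P, complementary P /\ open_arc P z.

Definition maps_gap (f : S1 -> S1) (P Q : arc) : Prop :=
  seteq (img f (open_arc P)) (open_arc Q).

Definition maps_to_principal (f : S1 -> S1) (P : arc) : Prop :=
  exists Q, principal Q /\ maps_gap f P Q.

Definition markov_system (a b binv : S1 -> S1) : Prop :=
  homeo_plus a /\ (forall x, a (a x) = x) /\ (exists x, a x <> x) /\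
  homeo_plus b /\ (forall x, b (b (b x)) = x) /\ (exists x, b x <> x) /\
  (forall x, b (binv x) = x /\ binv (b x) = x) /\
  (1 <= k)%nat /\
  (forall t i, (i < k)%nat -> fst (comp t i) <> snd (comp t i)) /\
  (forall t i t' j, (i < k)%nat -> (j < k)%nat -> (t <> t' \/ i <> j) ->
     forall z, closed_arc (comp t i) z -> ~ closed_arc (comp t' j) z) /\
  (forall t i j, ~ consec t i t j) /\
  seteq (img a (inK Ka)) inBB /\
  seteq (img b (inK Ka)) (inK Kb) /\
  seteq (img b (inK Kb)) (inK Kbi) /\
  (forall P, principal P -> maps_to_principal a P) /\
  (forall P, principal P ->
     (maps_to_principal b P /\ ~ maps_to_principal binv P) \/
     (~ maps_to_principal b P /\ maps_to_principal binv P)) /\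
  (forall P Q, principal P -> principal Q ->
     clos_refl_sym_trans arc
       (fun P' Q' => principal P' /\ principal Q' /\
          (maps_gap a P' Q' \/ maps_gap b P' Q' \/ maps_gap binv P' Q'))
       P Q).

(** An enumeration I_1, I_1', ..., I_k, I_k' of the principal gaps (indexed
    here from 0 to k-1), with signs e i (true: b_i = b, false: b_i = b^{-1})
    such that b_i(I_i) = I_i' and a(I_i') = I_{i+1 mod k}. *)
Definition bsel (b binv : S1 -> S1) (e : nat -> bool) (i : nat) : S1 -> S1 :=
  if e i then b else binv.

Definition enumeration (a b binv : S1 -> S1) (I I' : nat -> arc)
    (e : nat -> bool) : Prop :=
  (forall i, (i < k)%nat -> principal (I i) /\ principal (I' i)) /\
  (forall P, principal P -> exists i, (i < k)%nat /\ (P = I i \/ P = I' i)) /\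
  (forall i j, (i < k)%nat -> (j < k)%nat -> I i = I j -> i = j) /\
  (forall i j, (i < k)%nat -> (j < k)%nat -> I' i = I' j -> i = j) /\
  (forall i j, (i < k)%nat -> (j < k)%nat -> I i <> I' j) /\
  (forall i, (i < k)%nat -> maps_gap (bsel b binv e i) (I i) (I' i)) /\
  (forall i, (i < k)%nat -> maps_gap a (I' i) (I (Nat.modulo (S i) k))).

End Markov.

(** f_1 = a o b_k o a o b_{k-1} o ... o a o b_1  (fcomp a (bsel..) n is the
    composite of the first n factors a o b_i, rightmost first). *)
Fixpoint fcomp (a : S1 -> S1) (bs : nat -> S1 -> S1) (n : nat) : S1 -> S1 :=
  match n with
  | O => fun x => x
  | S m => fun x => a (bs m (fcomp a bs m x))
  end.

(** Subgroup of the group of bijections of S^1 generated by a and b: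
    contains id, closed under left composition by a generator and by the
    inverse of a generator. *)
Inductive gen (a b : S1 -> S1) : (S1 -> S1) -> Prop :=
| gen_id : gen a b (fun x => x)
| gen_mul (s g : S1 -> S1) : (s = a \/ s = b) -> gen a b g ->
    gen a b (fun x => s (g x))
| gen_inv (s g h : S1 -> S1) : (s = a \/ s = b) -> gen a b g ->
    (forall x, s (h x) = g x) -> gen a b h.

Definition fpow (n : nat) (f : S1 -> S1) : S1 -> S1 := fun x => Nat.iter n f x.

(* Ping-pong on the principal gaps.  Reading a word of G(M) letter by letter
   on I_1, as long as each letter b^{+-1} carries the current principal gap to
   a principal gap the word is f_1^n followed by a prefix a b_i ... a b_1 (and
   possibly b_{i+1}) of f_1, which maps I_1 onto one of the 2k principal gaps,
   onto I_1 itself only for the prefix of length 0.  By (E) the other letter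
   maps the current gap into S^1 \ X but not into a principal gap, hence into
   a complementary gap, i.e. into [[b]].  From then on, by (C) and (D), a sends
   [[b]] into [a] and b^{+-1} sends [a] into [[b]], while a letter cancelling
   its predecessor only undoes the last step.  Since [a] and [[b]] miss I_1,
   the stabilizer of I_1 is {f_1^n}.  Finally f_1 maps [a] into [a], yet maps
   the point b_1(x) of [[b]], x in [a], into [a]; so no power of f_1 is the
   identity. *)

From Pilot Require Import Defs.
From Stdlib Require Import Reals Relations.
From Stdlib Require Import Lra Lia ZArith Bool List ProofIrrelevance FunctionalExtensionality.
Open Scope R_scope.

Lemma exists_argmin {T : Type} (F : T -> R) (l : list T) :
  l <> nil -> exists x, In x l /\ forall y, In y l -> F x <= F y.
Proof.
  intros Hl. induction l as [|x l IH]; [contradiction|].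
  destruct l as [|y l].
  - exists x. split; [left; reflexivity|]. intros y [<-|[]]. lra.
  - destruct IH as [m [Hm Hmin]]; [discriminate|].
    destruct (Rle_dec (F x) (F m)).
    + exists x. split; [left; reflexivity|].
      intros w [<-|Hw]; [lra|]. specialize (Hmin w Hw). lra.
    + exists m. split; [right; exact Hm|].
      intros w [<-|Hw]; [lra|]. exact (Hmin w Hw).
Qed.

Lemma fpow_inv m (f g : S1 -> S1) x :
  (forall y, f (g y) = y) -> fpow m f (fpow m g x) = x.
Proof.
  intros Hfg. unfold fpow. revert x. induction m as [|m IH]; intro x; [reflexivity|].
  rewrite (Nat.iter_succ_r m _ f), (Nat.iter_succ m _ g), Hfg. apply IH.
Qed.

Lemma fpow_preserves m (f : S1 -> S1) (Y : S1 -> Prop) x :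
  (forall y, Y y -> Y (f y)) -> Y x -> Y (fpow m f x).
Proof.
  intros Hf Hx. unfold fpow. induction m as [|m IH]; [exact Hx|].
  rewrite Nat.iter_succ. apply Hf, IH.
Qed.

Lemma seteq_img_id (Y : S1 -> Prop) : seteq (img (fun x => x) Y) Y.
Proof. intro y. split; [intros [x [Hx <-]]; exact Hx | intro Hy; exists y; auto]. Qed.

Lemma seteq_img_comp (f g : S1 -> S1) (Y Z W : S1 -> Prop) :
  seteq (img f Y) Z -> seteq (img g Z) W -> seteq (img (fun x => g (f x)) Y) W.
Proof.
  intros Hf Hg y. split.
  - intros [x [Hx <-]]. apply Hg. exists (f x). split; [apply Hf; exists x|]; auto.
  - intros Hy. apply Hg in Hy. destruct Hy as [w [Hw <-]].
    apply Hf in Hw. destruct Hw as [x [Hx <-]]. exists x. auto.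
Qed.

Lemma seteq_img_inv (f g : S1 -> S1) (Y : S1 -> Prop) :
  (forall x, f (g x) = x) -> (forall x, g (f x) = x) ->
  seteq (img f Y) Y -> seteq (img g Y) Y.
Proof.
  intros Hfg Hgf Hf y. split.
  - intros [x [Hx <-]]. apply Hf in Hx. destruct Hx as [w [Hw <-]]. rewrite Hgf. exact Hw.
  - intros Hy. exists (f y). split; [apply Hf; exists y; auto | apply Hgf].
Qed.

Lemma seteq_img_fpow m (f : S1 -> S1) (Y : S1 -> Prop) :
  seteq (img f Y) Y -> seteq (img (fpow m f) Y) Y.
Proof.
  intros Hf. induction m as [|m IH]; [apply seteq_img_id|].
  exact (seteq_img_comp (fpow m f) f Y Y Y IH Hf).
Qed.

Lemma pt_range (x : S1) : 0 <= pt x < 1.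
Proof. exact (proj2_sig x). Qed.

Lemma pt_inj (x y : S1) : pt x = pt y -> x = y.
Proof.
  destruct x as [x Hx], y as [y Hy]. unfold pt. simpl. intros ->.
  f_equal. apply proof_irrelevance.
Qed.

Definition ccw_dist (z x : S1) : R :=
  if Rle_dec (pt z) (pt x) then pt x - pt z else pt x - pt z + 1.

Definition rcyc (u v w : R) : Prop := (u < v < w) \/ (v < w < u) \/ (w < u < v).

Lemma ccw_dist_range z x : 0 <= ccw_dist z x < 1.
Proof.
  unfold ccw_dist. pose proof (pt_range z). pose proof (pt_range x).
  destruct (Rle_dec (pt z) (pt x)); lra.
Qed.

Lemma ccw_dist_self z : ccw_dist z z = 0.
Proof. unfold ccw_dist. destruct (Rle_dec (pt z) (pt z)); lra. Qed.

Lemma ccw_dist_inj z x y : ccw_dist z x = ccw_dist z y -> x = y.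
Proof.
  unfold ccw_dist. pose proof (pt_range z). pose proof (pt_range x). pose proof (pt_range y).
  intro Heq. apply pt_inj.
  destruct (Rle_dec (pt z) (pt x)), (Rle_dec (pt z) (pt y)); lra.
Qed.

Lemma ccw_dist_pos z x : x <> z -> 0 < ccw_dist z x.
Proof.
  intros Hxz. destruct (ccw_dist_range z x) as [[Hpos|H0] _]; [exact Hpos|].
  exfalso. apply Hxz, (ccw_dist_inj z). rewrite ccw_dist_self. auto.
Qed.

Lemma ccw_dist_surj z t : 0 <= t < 1 -> exists x, ccw_dist z x = t.
Proof.
  intros Ht. pose proof (pt_range z).
  destruct (Rlt_dec (pt z + t) 1) as [Hlt|Hge].
  - assert (Hx : 0 <= pt z + t < 1) by lra.
    exists (exist (fun x => 0 <= x < 1) _ Hx). unfold ccw_dist, pt at 2 3. simpl. fold (pt z).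
    destruct (Rle_dec (pt z) (pt z + t)); lra.
  - assert (Hx : 0 <= pt z + t - 1 < 1) by lra.
    exists (exist (fun x => 0 <= x < 1) _ Hx). unfold ccw_dist, pt at 2 3. simpl. fold (pt z).
    destruct (Rle_dec (pt z) (pt z + t - 1)); lra.
Qed.

Lemma cyc_ccw_dist z x y w :
  cyc x y w <-> rcyc (ccw_dist z x) (ccw_dist z y) (ccw_dist z w).
Proof.
  unfold cyc, rcyc, ccw_dist.
  pose proof (pt_range z). pose proof (pt_range x). pose proof (pt_range y). pose proof (pt_range w).
  destruct (Rle_dec (pt z) (pt x)), (Rle_dec (pt z) (pt y)), (Rle_dec (pt z) (pt w));
  split; intros [Hc|[Hc|Hc]]; lra.
Qed.

Lemma arc_interior_inhabited p q : p <> q -> exists z, cyc p z q.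
Proof.
  intros Hpq. pose proof (ccw_dist_pos p q (not_eq_sym Hpq)). pose proof (ccw_dist_range p q).
  destruct (ccw_dist_surj p (ccw_dist p q / 2)) as [z Hz]; [lra|].
  exists z. apply (cyc_ccw_dist p). rewrite ccw_dist_self, Hz. unfold rcyc. lra.
Qed.

Lemma ccw_dist_closed_arc z P w :
  ccw_dist z (fst P) <= ccw_dist z w <= ccw_dist z (snd P) -> closed_arc P w.
Proof.
  intros [[Hlt1|Heq1] [Hlt2|Heq2]].
  - right; right. apply (cyc_ccw_dist z). unfold rcyc. lra.
  - right; left. apply (ccw_dist_inj z). auto.
  - left. apply (ccw_dist_inj z). auto.
  - left. apply (ccw_dist_inj z). auto.
Qed.

Lemma closed_arc_ccw_dist z P w :
  fst P <> snd P -> ~ closed_arc P z -> closed_arc P w ->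
  0 < ccw_dist z (fst P) < ccw_dist z (snd P) /\
  ccw_dist z (fst P) <= ccw_dist z w <= ccw_dist z (snd P).
Proof.
  destruct P as [p q]. unfold closed_arc. simpl. intros Hpq Hz Hw.
  assert (Hp : 0 < ccw_dist z p) by (apply ccw_dist_pos; intros ->; tauto).
  assert (Hq : 0 < ccw_dist z q) by (apply ccw_dist_pos; intros ->; tauto).
  assert (Hpq' : ccw_dist z p <> ccw_dist z q) by (intro E; apply Hpq, (ccw_dist_inj z), E).
  assert (Hnot : ~ rcyc (ccw_dist z p) 0 (ccw_dist z q)).
  { rewrite <- (ccw_dist_self z), <- cyc_ccw_dist. tauto. }
  pose proof (ccw_dist_range z p). pose proof (ccw_dist_range z q).
  assert (Hlt : ccw_dist z p < ccw_dist z q) by (unfold rcyc in Hnot; lra).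
  split; [lra|].
  destruct Hw as [->|[->|Hw]]; [lra|lra|].
  apply (cyc_ccw_dist z) in Hw. pose proof (ccw_dist_range z w). unfold rcyc in Hw. lra.
Qed.

Definition gap_in (Y : S1 -> Prop) (P : arc) : Prop :=
  Y (fst P) /\ Y (snd P) /\ forall z, open_arc P z -> ~ Y z.

Lemma gap_in_eq Y P Q z :
  gap_in Y P -> gap_in Y Q -> open_arc P z -> open_arc Q z -> P = Q.
Proof.
  destruct P as [p q], Q as [r s]. unfold gap_in, open_arc. simpl.
  intros (Yp & Yq & FP) (Yr & Ys & FQ) HP HQ.
  apply (cyc_ccw_dist z) in HP, HQ. rewrite ccw_dist_self in HP, HQ.
  pose proof (ccw_dist_range z p). pose proof (ccw_dist_range z q).
  pose proof (ccw_dist_range z r). pose proof (ccw_dist_range z s).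
  unfold rcyc in HP, HQ.
  assert (Ep : ccw_dist z p = ccw_dist z r).
  { destruct (Rtotal_order (ccw_dist z p) (ccw_dist z r)) as [L|[L|L]]; [exfalso| |exfalso]; auto.
    - refine (FP r _ Yr). apply (cyc_ccw_dist z). unfold rcyc. lra.
    - refine (FQ p _ Yp). apply (cyc_ccw_dist z). unfold rcyc. lra. }
  assert (Es : ccw_dist z q = ccw_dist z s).
  { destruct (Rtotal_order (ccw_dist z q) (ccw_dist z s)) as [L|[L|L]]; [exfalso| |exfalso]; auto.
    - refine (FQ q _ Yq). apply (cyc_ccw_dist z). unfold rcyc. lra.
    - refine (FP s _ Ys). apply (cyc_ccw_dist z). unfold rcyc. lra. }
  f_equal; apply (ccw_dist_inj z); assumption.
Qed.

Section PingPong.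

Variables (k : nat) (comp : kind -> nat -> arc) (a b binv : S1 -> S1).
Hypothesis HM : markov_system k comp a b binv.

Local Notation X := (inX k comp).
Local Notation A := (inK k comp Ka).
Local Notation BB := (inBB k comp).
Local Notation principal_gap := (Defs.principal k comp).
Local Notation complementary_gap := (Defs.complementary k comp).

Lemma a_invol x : a (a x) = x.
Proof. destruct HM as (_ & H & _). apply H. Qed.
Lemma b_cyc x y z : cyc x y z -> cyc (b x) (b y) (b z).
Proof. destruct HM as (_ & _ & _ & (_ & _ & H) & _). apply H. Qed.
Lemma b_order3 x : b (b (b x)) = x.
Proof. destruct HM as (_ & _ & _ & _ & H & _). apply H. Qed.
Lemma b_binv x : b (binv x) = x.
Proof. destruct HM as (_ & _ & _ & _ & _ & _ & H & _). apply H. Qed.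
Lemma binv_b x : binv (b x) = x.
Proof. destruct HM as (_ & _ & _ & _ & _ & _ & H & _). apply H. Qed.
Lemma k_pos : (0 < k)%nat.
Proof. destruct HM as (_ & _ & _ & _ & _ & _ & _ & H & _). exact H. Qed.
Lemma comp_nondeg t i : (i < k)%nat -> fst (comp t i) <> snd (comp t i).
Proof. destruct HM as (_ & _ & _ & _ & _ & _ & _ & _ & H & _). apply H. Qed.
Lemma comp_disjoint t i t' j z : (i < k)%nat -> (j < k)%nat -> (t <> t' \/ i <> j) ->
  closed_arc (comp t i) z -> ~ closed_arc (comp t' j) z.
Proof.
  destruct HM as (_ & _ & _ & _ & _ & _ & _ & _ & _ & H & _).
  intros Hi Hj Hne. exact (H t i t' j Hi Hj Hne z).
Qed.
Lemma no_consec_same_kind t i j : ~ consec k comp t i t j.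
Proof. destruct HM as (_ & _ & _ & _ & _ & _ & _ & _ & _ & _ & H & _). apply H. Qed.
Lemma a_A_BB : seteq (img a A) BB.
Proof. destruct HM as (_ & _ & _ & _ & _ & _ & _ & _ & _ & _ & _ & H & _). exact H. Qed.
Lemma b_A_Kb : seteq (img b A) (inK k comp Kb).
Proof. destruct HM as (_ & _ & _ & _ & _ & _ & _ & _ & _ & _ & _ & _ & H & _). exact H. Qed.
Lemma b_Kb_Kbi : seteq (img b (inK k comp Kb)) (inK k comp Kbi).
Proof. destruct HM as (_ & _ & _ & _ & _ & _ & _ & _ & _ & _ & _ & _ & _ & H & _). exact H. Qed.
Lemma principal_b_xor_binv P : principal_gap P ->
  (maps_to_principal k comp b P /\ ~ maps_to_principal k comp binv P) \/
  (~ maps_to_principal k comp b P /\ maps_to_principal k comp binv P).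
Proof.
  destruct HM as (_ & _ & _ & _ & _ & _ & _ & _ & _ & _ & _ & _ & _ & _ & _ & H & _). apply H.
Qed.

Lemma b_b x : b (b x) = binv x.
Proof. rewrite <- (b_order3 (binv x)), b_binv. reflexivity. Qed.

Lemma binv_binv x : binv (binv x) = b x.
Proof. rewrite <- (b_b (binv x)), b_binv. reflexivity. Qed.

Definition bsgn (s : bool) : S1 -> S1 := if s then b else binv.

Lemma bsgn_comp s t x : bsgn s (bsgn t x) = if eqb s t then bsgn (negb t) x else x.
Proof. destruct s, t; simpl; auto using b_b, b_binv, binv_b, binv_binv. Qed.

Lemma bsgnK s x : bsgn (negb s) (bsgn s x) = x.
Proof. rewrite bsgn_comp. destruct s; reflexivity. Qed.

Lemma bsgn_cyc s x y z : cyc x y z -> cyc (bsgn s x) (bsgn s y) (bsgn s z).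
Proof.
  destruct s; simpl; intro H; [apply b_cyc, H|].
  rewrite <- !b_b. apply b_cyc, b_cyc, H.
Qed.

Lemma X_b x : X x -> X (b x).
Proof.
  intros [[] Hx].
  - exists Kb. apply b_A_Kb. exists x. auto.
  - exists Kbi. apply b_Kb_Kbi. exists x. auto.
  - exists Ka. apply b_Kb_Kbi in Hx. destruct Hx as [y [Hy <-]].
    apply b_A_Kb in Hy. destruct Hy as [w [Hw <-]]. rewrite b_order3. exact Hw.
Qed.

Lemma X_bsgn s x : X (bsgn s x) <-> X x.
Proof.
  assert (Hb : forall s x, X x -> X (bsgn s x)).
  { intros [] y Hy; simpl; [|rewrite <- b_b]; auto using X_b. }
  split; [|apply Hb]. intros H. rewrite <- (bsgnK s x). apply Hb, H.
Qed.

Lemma bsgn_A_BB s x : A x -> BB (bsgn s x).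
Proof.
  intros Hx. destruct s; simpl.
  - left. apply b_A_Kb. exists x. auto.
  - right; left. rewrite <- b_b. apply b_Kb_Kbi. exists (b x). split; auto.
    apply b_A_Kb. exists x. auto.
Qed.

Lemma a_BB_A x : BB x -> A (a x).
Proof. intros Hx. apply a_A_BB in Hx. destruct Hx as [y [Hy <-]]. rewrite a_invol. exact Hy. Qed.

Lemma kind_eq_dec (t t' : kind) : {t = t'} + {t <> t'}.
Proof. decide equality. Qed.

Lemma comp_unique t i t' j z : (i < k)%nat -> (j < k)%nat ->
  closed_arc (comp t i) z -> closed_arc (comp t' j) z -> t = t' /\ i = j.
Proof.
  intros Hi Hj Hz Hz'.
  destruct (kind_eq_dec t t'), (Nat.eq_dec i j); auto;
  exfalso; refine (comp_disjoint t i t' j z Hi Hj _ Hz Hz'); tauto.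
Qed.

Lemma consec_gap t i t' j : consec k comp t i t' j ->
  gap_in X (gap_of comp t i t' j) /\ snd (comp t i) <> fst (comp t' j).
Proof.
  intros (Hi & Hj & Hne & Hfree). repeat split.
  - exists t, i. split; [exact Hi|]. right; left. reflexivity.
  - exists t', j. split; [exact Hj|]. left. reflexivity.
  - exact Hfree.
  - intros E. destruct (comp_unique t i t' j (snd (comp t i)) Hi Hj) as [E1 E2].
    + right; left. reflexivity.
    + rewrite E. left. reflexivity.
    + destruct Hne; contradiction.
Qed.

Lemma principal_gap_in P : principal_gap P -> gap_in X P /\ fst P <> snd P.
Proof. intros (t & i & t' & j & Hc & -> & _). exact (consec_gap t i t' j Hc). Qed.

Lemma complementary_gap_in P : complementary_gap P -> gap_in X P.
Proof. intros (t & i & t' & j & Hc & -> & _). exact (proj1 (consec_gap t i t' j Hc)). Qed.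

Lemma principal_not_complementary P : principal_gap P -> ~ complementary_gap P.
Proof.
  intros (t & i & t' & j & (Hi & Hj & _) & -> & Hkind) (u & l & u' & m & (Hl & Hm & _) & E & Hkind').
  unfold gap_of in E. injection E as E1 E2.
  destruct (comp_unique t i u l (snd (comp t i)) Hi Hl) as [-> _].
  { right; left. reflexivity. }
  { rewrite E1. right; left. reflexivity. }
  destruct (comp_unique t' j u' m (fst (comp t' j)) Hj Hm) as [-> _].
  { left. reflexivity. }
  { rewrite E2. left. reflexivity. }
  unfold is_b_kind in Hkind. intuition congruence.
Qed.

Lemma A_BB_disjoint x : A x -> ~ BB x.
Proof.
  intros (i & Hi & Hx) [(j & Hj & Hy)|[(j & Hj & Hy)|(P & HP & Hz)]].
  - destruct (comp_unique Ka i Kb j x Hi Hj Hx Hy). discriminate.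
  - destruct (comp_unique Ka i Kbi j x Hi Hj Hx Hy). discriminate.
  - apply (complementary_gap_in P HP) in Hz. apply Hz. exists Ka, i. auto.
Qed.

Lemma principal_not_A P z : principal_gap P -> open_arc P z -> ~ A z.
Proof.
  intros HP Hz HA. destruct (principal_gap_in P HP) as [(_ & _ & Hfree) _].
  apply (Hfree z Hz). exists Ka. exact HA.
Qed.

Lemma principal_not_BB P z : principal_gap P -> open_arc P z -> ~ BB z.
Proof.
  intros HP Hz. destruct (principal_gap_in P HP) as [HPX _].
  pose proof (proj2 (proj2 HPX) z Hz) as HnX.
  intros [H|[H|(Q & HQ & HzQ)]].
  - apply HnX. exists Kb. exact H.
  - apply HnX. exists Kbi. exact H.
  - assert (P = Q) as <- by exact (gap_in_eq X P Q z HPX (complementary_gap_in Q HQ) Hz HzQ).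
    exact (principal_not_complementary P HP HQ).
Qed.

Lemma comp_argmin (F : kind -> nat -> R) :
  exists t i, (i < k)%nat /\ forall u l, (l < k)%nat -> F t i <= F u l.
Proof.
  set (comps := list_prod (Ka :: Kb :: Kbi :: nil) (seq 0 k)).
  assert (Hcomps : forall t i, In (t, i) comps <-> (i < k)%nat).
  { intros t i. unfold comps. rewrite in_prod_iff, in_seq. destruct t; simpl; intuition lia. }
  assert (Hne : comps <> nil).
  { intro E. pose proof (proj2 (Hcomps Ka 0%nat) k_pos) as H. rewrite E in H. exact H. }
  destruct (exists_argmin (fun c => F (fst c) (snd c)) comps Hne) as [[t i] [Hi Hmin]].
  exists t, i. split; [exact (proj1 (Hcomps t i) Hi)|].
  intros u l Hl. exact (Hmin (u, l) (proj2 (Hcomps u l) Hl)).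
Qed.

Lemma comp_ccw_dist z t i w : ~ X z -> (i < k)%nat -> closed_arc (comp t i) w ->
  0 < ccw_dist z (fst (comp t i)) < ccw_dist z (snd (comp t i)) /\
  ccw_dist z (fst (comp t i)) <= ccw_dist z w <= ccw_dist z (snd (comp t i)).
Proof.
  intros HnX Hi Hw. apply (closed_arc_ccw_dist z _ w (comp_nondeg t i Hi)); [|exact Hw].
  intro Hz. apply HnX. exists t, i. auto.
Qed.

(* The gap through z runs from the last component end before z to the first
   component start after z, both measured counterclockwise from z. *)
Lemma notX_in_gap z : ~ X z ->
  exists t i t' j, consec k comp t i t' j /\ open_arc (gap_of comp t i t' j) z.
Proof.
  intros HnX. set (d := ccw_dist z).
  destruct (comp_argmin (fun u l => d (fst (comp u l)))) as (t' & j & Hj & Hfirst).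
  destruct (comp_argmin (fun u l => - d (snd (comp u l)))) as (t & i & Hi & Hlast).
  set (f := fst (comp t' j)) in *. set (s := snd (comp t i)) in *.
  assert (Hbetween : forall u l w, (l < k)%nat -> closed_arc (comp u l) w -> d f <= d w <= d s).
  { intros u l w Hl Hw.
    destruct (comp_ccw_dist z u l w HnX Hl Hw) as [_ Hw'].
    specialize (Hfirst u l Hl). specialize (Hlast u l Hl). fold d in Hw'. lra. }
  destruct (comp_ccw_dist z t' j f HnX Hj (or_introl eq_refl)) as [[Hf Hfs] _].
  specialize (Hlast t' j Hj). fold d f s in Hf, Hfs, Hlast.
  exists t, i, t', j. split; [repeat split; auto|].
  - destruct (kind_eq_dec t t') as [<-|]; [|auto].
    destruct (Nat.eq_dec i j) as [<-|]; [|auto]. exfalso.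
    set (u := match t with Ka => Kb | _ => Ka end).
    assert (Hu : t <> u) by (unfold u; destruct t; discriminate).
    apply (comp_disjoint u 0 t i (fst (comp u 0%nat)) k_pos Hi (or_introl (not_eq_sym Hu))).
    + left. reflexivity.
    + apply (ccw_dist_closed_arc z), (Hbetween u 0%nat _ k_pos), or_introl, eq_refl.
  - intros w Hw (u & l & Hl & Hwc).
    pose proof (Hbetween u l w Hl Hwc).
    apply (cyc_ccw_dist z) in Hw. unfold rcyc in Hw. simpl in Hw. unfold d, f, s in *. lra.
  - apply (cyc_ccw_dist z). rewrite ccw_dist_self. unfold rcyc. simpl. unfold d, f, s in *. lra.
Qed.

Lemma notX_principal_or_BB z : ~ X z -> (exists P, principal_gap P /\ open_arc P z) \/ BB z.
Proof.
  intros HnX. destruct (notX_in_gap z HnX) as (t & i & t' & j & Hc & Hz).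
  assert (Ht : t <> t') by (intros <-; exact (no_consec_same_kind t i j Hc)).
  destruct t, t'; try contradiction.
  1, 2, 3, 5: left; eexists; split; [|exact Hz];
    do 4 eexists; split; [exact Hc|split; [reflexivity|]]; unfold is_b_kind; tauto.
  all: right; right; right; eexists; split; [|exact Hz];
    do 4 eexists; split; [exact Hc|split; [reflexivity|]]; tauto.
Qed.

Definition bsgn_arc (s : bool) (P : arc) : arc := (bsgn s (fst P), bsgn s (snd P)).

Lemma bsgn_open_arc s P z : open_arc P z -> open_arc (bsgn_arc s P) (bsgn s z).
Proof. apply bsgn_cyc. Qed.

Lemma bsgn_arcK s P : bsgn_arc (negb s) (bsgn_arc s P) = P.
Proof. destruct P as [p q]. unfold bsgn_arc. simpl. rewrite !bsgnK. reflexivity. Qed.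

Lemma bsgn_gap_in s P : gap_in X P -> gap_in X (bsgn_arc s P).
Proof.
  intros (Hp & Hq & Hfree). unfold bsgn_arc, gap_in. simpl. rewrite !X_bsgn.
  repeat split; [exact Hp | exact Hq |].
  intros w Hw HXw. apply (Hfree (bsgn (negb s) w)).
  - rewrite <- (bsgn_arcK s P). apply bsgn_open_arc, Hw.
  - rewrite X_bsgn. exact HXw.
Qed.

Lemma maps_gap_bsgn_arc s P : maps_gap (bsgn s) P (bsgn_arc s P).
Proof.
  intros y. split.
  - intros [x [Hx <-]]. apply bsgn_open_arc, Hx.
  - intros Hy. exists (bsgn (negb s) y). split.
    + rewrite <- (bsgn_arcK s P). apply bsgn_open_arc, Hy.
    + rewrite bsgn_comp. destruct s; reflexivity.
Qed.

Lemma maps_gap_bsgn_inv s P Q : maps_gap (bsgn s) P Q -> maps_gap (bsgn (negb s)) Q P.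
Proof.
  intros H y. split.
  - intros [x [Hx <-]]. apply H in Hx. destruct Hx as [w [Hw <-]]. rewrite bsgnK. exact Hw.
  - intros Hy. exists (bsgn s y). split; [apply H; exists y; auto | apply bsgnK].
Qed.

(* If b^s z lay in a principal gap Q, then b^{-s} Q and P would be gaps of X
   through z, hence equal, and b^s would map P onto Q. *)
Lemma wrong_letter_into_BB s P z : principal_gap P ->
  ~ maps_to_principal k comp (bsgn s) P -> open_arc P z -> BB (bsgn s z).
Proof.
  intros HP Hwrong Hz. destruct (principal_gap_in P HP) as [HPX _].
  assert (HnX : ~ X (bsgn s z)) by (rewrite X_bsgn; exact (proj2 (proj2 HPX) z Hz)).
  destruct (notX_principal_or_BB _ HnX) as [(Q & HQ & HzQ)|HBB]; [exfalso|exact HBB].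
  assert (EP : bsgn_arc (negb s) Q = P).
  { apply (gap_in_eq X _ _ z); [|exact HPX| |exact Hz].
    - apply bsgn_gap_in, principal_gap_in, HQ.
    - rewrite <- (bsgnK s z). apply bsgn_open_arc, HzQ. }
  apply Hwrong. exists Q. split; [exact HQ|]. rewrite <- EP.
  pose proof (maps_gap_bsgn_arc s (bsgn_arc (negb s) Q)) as HQ'.
  pose proof (bsgn_arcK (negb s) Q) as EQ. rewrite negb_involutive in EQ.
  rewrite EQ in HQ'. exact HQ'.
Qed.


Variables (I I' : nat -> arc) (e : nat -> bool).
Hypothesis HE : enumeration k comp a b binv I I' e.

Lemma I_principal i : (i < k)%nat -> principal_gap (I i).
Proof. destruct HE as (H & _). apply H. Qed.
Lemma I'_principal i : (i < k)%nat -> principal_gap (I' i).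
Proof. destruct HE as (H & _). apply H. Qed.
Lemma I_inj i j : (i < k)%nat -> (j < k)%nat -> I i = I j -> i = j.
Proof. destruct HE as (_ & _ & H & _). apply H. Qed.
Lemma I_neq_I' i j : (i < k)%nat -> (j < k)%nat -> I i <> I' j.
Proof. destruct HE as (_ & _ & _ & _ & H & _). apply H. Qed.
Lemma b_I_I' i : (i < k)%nat -> maps_gap (bsgn (e i)) (I i) (I' i).
Proof. destruct HE as (_ & _ & _ & _ & _ & H & _). apply H. Qed.
Lemma a_I'_I i : (i < k)%nat -> maps_gap a (I' i) (I (S i mod k)).
Proof. destruct HE as (_ & _ & _ & _ & _ & _ & H). apply H. Qed.

Definition Igap (i : nat) (primed : bool) : arc := if primed then I' i else I i.

Definition right_letter (i : nat) (primed : bool) : bool :=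
  if primed then negb (e i) else e i.

Lemma Igap_principal i p : (i < k)%nat -> principal_gap (Igap i p).
Proof. intros Hi. destruct p; [apply I'_principal | apply I_principal]; exact Hi. Qed.

Lemma right_letter_maps_gap i p : (i < k)%nat ->
  maps_gap (bsgn (right_letter i p)) (Igap i p) (Igap i (negb p)).
Proof. intros Hi. destruct p; [apply maps_gap_bsgn_inv|]; apply b_I_I', Hi. Qed.

Lemma wrong_letter_not_principal i p : (i < k)%nat ->
  ~ maps_to_principal k comp (bsgn (negb (right_letter i p))) (Igap i p).
Proof.
  intros Hi Hwrong.
  assert (Hright : maps_to_principal k comp (bsgn (right_letter i p)) (Igap i p)).
  { exists (Igap i (negb p)). split; [apply Igap_principal, Hi | apply right_letter_maps_gap, Hi]. }
  destruct (principal_b_xor_binv (Igap i p) (Igap_principal i p Hi)) as [[Hb Hbinv]|[Hb Hbinv]];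
  destruct (right_letter i p); simpl in *; tauto.
Qed.

Definition prefix (i : nat) : S1 -> S1 := fcomp a (bsel b binv e) i.

Lemma prefix_succ i x : prefix (S i) x = a (bsgn (e i) (prefix i x)).
Proof. reflexivity. Qed.

Fixpoint prefix_inv (i : nat) (x : S1) : S1 :=
  match i with
  | O => x
  | S m => prefix_inv m (bsgn (negb (e m)) (a x))
  end.

Lemma prefixK i x : prefix_inv i (prefix i x) = x.
Proof.
  revert x. induction i as [|i IH]; intro x; [reflexivity|].
  simpl prefix_inv. rewrite prefix_succ, a_invol, bsgnK. apply IH.
Qed.

Lemma prefix_invK i x : prefix i (prefix_inv i x) = x.
Proof.
  revert x. induction i as [|i IH]; intro x; [reflexivity|].
  simpl prefix_inv. rewrite prefix_succ, IH, bsgn_comp. destruct (e i); apply a_invol.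
Qed.

Lemma prefix_maps_gap i : (i <= k)%nat -> maps_gap (prefix i) (I 0) (I (i mod k)).
Proof.
  pose proof k_pos as Hk.
  induction i as [|i IH]; intros Hi.
  - rewrite Nat.Div0.mod_0_l. apply seteq_img_id.
  - rewrite Nat.mod_small in IH by lia.
    apply (seteq_img_comp (fun x => bsgn (e i) (prefix i x)) a _ (open_arc (I' i))).
    + apply (seteq_img_comp (prefix i) (bsgn (e i)) _ (open_arc (I i))).
      * apply IH. lia.
      * apply b_I_I'. lia.
    + apply a_I'_I. lia.
Qed.

Definition f1 : S1 -> S1 := prefix k.
Definition f1_inv : S1 -> S1 := prefix_inv k.

Lemma f1_last x : f1 x = a (bsgn (e (k - 1)) (prefix (k - 1) x)).
Proof.
  pose proof k_pos. unfold f1. replace k with (S (k - 1)) at 1 by lia. apply prefix_succ.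
Qed.

Lemma f1_maps_gap : maps_gap f1 (I 0) (I 0).
Proof.
  pose proof (prefix_maps_gap k (le_n k)) as H.
  rewrite Nat.Div0.mod_same in H. exact H.
Qed.

Lemma f1_inv_maps_gap : maps_gap f1_inv (I 0) (I 0).
Proof. exact (seteq_img_inv f1 f1_inv _ (prefix_invK k) (prefixK k) f1_maps_gap). Qed.

Definition zpow (n : Z) : S1 -> S1 :=
  if (0 <=? n)%Z then fpow (Z.to_nat n) f1 else fpow (Z.to_nat (- n)) f1_inv.

Lemma zpow_succ n x : zpow (n + 1) x = f1 (zpow n x).
Proof.
  unfold zpow. destruct (Z.leb_spec 0 n), (Z.leb_spec 0 (n + 1)); try lia.
  - replace (Z.to_nat (n + 1)) with (S (Z.to_nat n)) by lia. reflexivity.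
  - replace n with (-1)%Z by lia. symmetry. apply prefix_invK.
  - replace (Z.to_nat (- n)) with (S (Z.to_nat (- (n + 1)))) by lia.
    unfold fpow. rewrite Nat.iter_succ. symmetry. apply prefix_invK.
Qed.

Lemma zpow_maps_gap n : maps_gap (zpow n) (I 0) (I 0).
Proof.
  unfold zpow. destruct (0 <=? n)%Z; apply seteq_img_fpow.
  - exact f1_maps_gap.
  - exact f1_inv_maps_gap.
Qed.

Lemma zpow_fpow n : exists m : nat,
  zpow n = fpow m f1 \/ (fun x => fpow m f1 (zpow n x)) = (fun x => x).
Proof.
  unfold zpow. destruct (0 <=? n)%Z.
  - exists (Z.to_nat n). left. reflexivity.
  - exists (Z.to_nat (- n)). right. apply functional_extensionality. intro x.
    apply fpow_inv, prefix_invK.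
Qed.

Definition gap_word (i : nat) (p : bool) (n : Z) (x : S1) : S1 :=
  if p then bsgn (e i) (prefix i (zpow n x)) else prefix i (zpow n x).

Lemma gap_word_maps_gap i p n : (i < k)%nat -> maps_gap (gap_word i p n) (I 0) (Igap i p).
Proof.
  intros Hi.
  assert (Hpre : maps_gap (fun x => prefix i (zpow n x)) (I 0) (I i)).
  { apply (seteq_img_comp (zpow n) (prefix i) _ (open_arc (I 0))); [apply zpow_maps_gap|].
    rewrite <- (Nat.mod_small i k Hi) at 2. apply prefix_maps_gap. lia. }
  destruct p; [|exact Hpre].
  exact (seteq_img_comp _ (bsgn (e i)) _ _ _ Hpre (b_I_I' i Hi)).
Qed.

Lemma right_letter_gap_word i p n :
  (fun x => bsgn (right_letter i p) (gap_word i p n x)) = gap_word i (negb p) n.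
Proof.
  apply functional_extensionality. intro x. destruct p; simpl; [apply bsgnK | reflexivity].
Qed.

Lemma a_gap_word i p n : (i < k)%nat ->
  exists i' p' n', (i' < k)%nat /\ (fun x => a (gap_word i p n x)) = gap_word i' p' n'.
Proof.
  intros Hi. pose proof k_pos.
  destruct p; simpl.
  - destruct (Nat.eq_dec (S i) k) as [Elast|Elast].
    + exists 0%nat, false, (n + 1)%Z. split; [lia|].
      apply functional_extensionality. intro x. simpl. rewrite zpow_succ.
      unfold f1. rewrite <- Elast. reflexivity.
    + exists (S i), false, n. split; [lia|]. reflexivity.
  - destruct i as [|i].
    + exists (k - 1)%nat, true, (n - 1)%Z. split; [lia|].
      apply functional_extensionality. intro x. simpl.
      replace n with ((n - 1) + 1)%Z at 1 by lia.
      rewrite zpow_succ, f1_last. apply a_invol.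
    + exists i, true, n. split; [lia|].
      apply functional_extensionality. intro x. simpl. rewrite prefix_succ, a_invol. reflexivity.
Qed.


(* Words that have left the principal gaps; the index says whether the last
   letter applied was [a] (then I_1 is sent into [a]) or a b-letter (into [[b]]). *)
Inductive escaping : bool -> (S1 -> S1) -> Prop :=
| escaping_a h : escaping false h -> escaping true (fun x => a (h x))
| escaping_b s h : escaping true h -> escaping false (fun x => bsgn s (h x))
| escaping_wrong i p n : (i < k)%nat ->
    escaping false (fun x => bsgn (negb (right_letter i p)) (gap_word i p n x)).

Lemma escaping_into last_a g z : escaping last_a g -> open_arc (I 0) z ->
  if last_a then A (g z) else BB (g z).
Proof.
  intros Hg Hz. induction Hg as [h _ IH|s h _ IH|i p n Hi].
  - apply a_BB_A, IH.
  - apply bsgn_A_BB, IH.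
  - apply (wrong_letter_into_BB _ (Igap i p)).
    + apply Igap_principal, Hi.
    + apply wrong_letter_not_principal, Hi.
    + apply (gap_word_maps_gap i p n Hi). exists z. auto.
Qed.

Definition normal_form (g : S1 -> S1) : Prop :=
  (exists i p n, (i < k)%nat /\ g = gap_word i p n) \/ escaping true g \/ escaping false g.

Lemma normal_form_a g : normal_form g -> normal_form (fun x => a (g x)).
Proof.
  intros [(i & p & n & Hi & ->)|[Hg|Hg]].
  - left. exact (a_gap_word i p n Hi).
  - inversion Hg as [h Hh| |]. subst g. right; right.
    replace (fun x => a (a (h x))) with h; [exact Hh|].
    apply functional_extensionality. intro x. symmetry. apply a_invol.
  - right; left. apply escaping_a, Hg.
Qed.

Lemma normal_form_bsgn s g : normal_form g -> normal_form (fun x => bsgn s (g x)).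
Proof.
  intros [(i & p & n & Hi & ->)|[Hg|Hg]].
  - destruct (bool_dec s (right_letter i p)) as [->|Hs].
    + left. exists i, (negb p), n. split; [exact Hi|]. apply right_letter_gap_word.
    + replace s with (negb (right_letter i p)) by (destruct s, (right_letter i p); tauto).
      right; right. apply escaping_wrong, Hi.
  - right; right. apply escaping_b, Hg.
  - inversion Hg as [|t h Hh|i p n Hi]; subst g.
    + replace (fun x => bsgn s (bsgn t (h x))) with
        (if eqb s t then (fun x => bsgn (negb t) (h x)) else h).
      * destruct (eqb s t); [right; right; apply escaping_b|right; left]; exact Hh.
      * apply functional_extensionality. intro x.
        rewrite bsgn_comp. destruct (eqb s t); reflexivity.
    + left. destruct (bool_dec s (right_letter i p)) as [->|Hs].
      * exists i, p, n. split; [exact Hi|]. apply functional_extensionality. intro x.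
        rewrite bsgn_comp. destruct (right_letter i p); reflexivity.
      * replace s with (negb (right_letter i p)) by (destruct s, (right_letter i p); tauto).
        exists i, (negb p), n. split; [exact Hi|]. rewrite <- right_letter_gap_word.
        apply functional_extensionality. intro x.
        rewrite bsgn_comp, eqb_reflx, negb_involutive. reflexivity.
Qed.

Lemma gen_normal_form g : gen a b g -> normal_form g.
Proof.
  induction 1 as [|s g Hs _ IH|s g h Hs _ IH Hh].
  - left. exists 0%nat, false, 0%Z. split; [exact k_pos | reflexivity].
  - destruct Hs as [->| ->]; [apply normal_form_a | apply (normal_form_bsgn true)]; exact IH.
  - destruct Hs as [->| ->].
    + replace h with (fun x => a (g x)); [apply normal_form_a, IH|].
      apply functional_extensionality. intro x. rewrite <- Hh. apply a_invol.
    + replace h with (fun x => bsgn false (g x)); [apply normal_form_bsgn, IH|].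
      apply functional_extensionality. intro x. rewrite <- Hh. apply binv_b.
Qed.

Lemma stabilizer_zpow g : gen a b g -> maps_gap g (I 0) (I 0) -> exists n, g = zpow n.
Proof.
  intros Hg Hstab. pose proof k_pos as Hk.
  destruct (principal_gap_in (I 0) (I_principal 0 Hk)) as [HX Hne].
  destruct (arc_interior_inhabited _ _ Hne) as [z Hz].
  assert (Hgz : open_arc (I 0) (g z)) by (apply Hstab; exists z; auto).
  destruct (gen_normal_form g Hg) as [(i & p & n & Hi & ->)|[Hesc|Hesc]].
  - assert (Hgap : open_arc (Igap i p) (gap_word i p n z))
      by (apply (gap_word_maps_gap i p n Hi); exists z; auto).
    assert (E : I 0 = Igap i p).
    { apply (gap_in_eq X _ _ (gap_word i p n z) HX); [apply principal_gap_in, Igap_principal, Hi|exact Hgz|exact Hgap]. }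
    destruct p; simpl in E.
    + exfalso. exact (I_neq_I' 0 i Hk Hi E).
    + apply I_inj in E; [|exact Hk|exact Hi]. subst i. exists n. reflexivity.
  - exfalso. exact (principal_not_A _ _ (I_principal 0 Hk) Hgz (escaping_into true g z Hesc Hz)).
  - exfalso. exact (principal_not_BB _ _ (I_principal 0 Hk) Hgz (escaping_into false g z Hesc Hz)).
Qed.

Lemma fpow_f1_stabilizer g n :
  g = fpow n f1 \/ (fun x => fpow n f1 (g x)) = (fun x => x) -> maps_gap g (I 0) (I 0).
Proof.
  intros [->|Hinv]; [exact (seteq_img_fpow n f1 _ f1_maps_gap)|].
  replace g with (fpow n f1_inv); [exact (seteq_img_fpow n f1_inv _ f1_inv_maps_gap)|].
  apply functional_extensionality. intro x.
  rewrite <- (fpow_inv n f1_inv f1 (g x) (prefixK k)).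
  change (fpow n f1 (g x)) with ((fun y => fpow n f1 (g y)) x). rewrite Hinv. reflexivity.
Qed.

Lemma prefix_A i x : A x -> A (prefix i x).
Proof.
  intros Hx. induction i as [|i IH]; [exact Hx|].
  rewrite prefix_succ. apply a_BB_A, bsgn_A_BB, IH.
Qed.

(* The first two letters of f_1 b_1 are b_1 b_1 = b_1^{-1}, which sends [a] into [[b]]. *)
Lemma f1_bsgn_A x : A x -> A (f1 (bsgn (e 0) x)).
Proof.
  intros Hx. pose proof k_pos. unfold f1. replace (prefix k) with (prefix (S (k - 1))) by (f_equal; lia).
  induction (k - 1)%nat as [|m IH]; rewrite prefix_succ; apply a_BB_A.
  - change (prefix 0 (bsgn (e 0) x)) with (bsgn (e 0) x).
    rewrite bsgn_comp, eqb_reflx. apply bsgn_A_BB, Hx.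
  - apply bsgn_A_BB, IH.
Qed.

Lemma f1_infinite_order n : fpow (S n) f1 <> (fun x => x).
Proof.
  intros Hid. pose proof k_pos as Hk.
  set (x0 := fst (comp Ka 0%nat)).
  assert (Hx0 : A x0) by (exists 0%nat; split; [exact Hk | left; reflexivity]).
  set (y := bsgn (e 0) x0).
  assert (Hfix : fpow (S n) f1 y = y) by (rewrite Hid; reflexivity).
  unfold fpow in Hfix. rewrite Nat.iter_succ_r in Hfix.
  apply (A_BB_disjoint y); [|apply bsgn_A_BB, Hx0].
  rewrite <- Hfix. apply (fpow_preserves n f1 _ (f1 y)); [apply prefix_A | apply f1_bsgn_A, Hx0].
Qed.

End PingPong.

Theorem lemma11p3 (k : nat) (comp : kind -> nat -> arc) (a b binv : S1 -> S1)
  (I I' : nat -> arc) (e : nat -> bool) :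
  markov_system k comp a b binv ->
  enumeration k comp a b binv I I' e ->
  let f1 := fcomp a (bsel b binv e) k in
  (* the stabilizer of I_1 in G(M) is exactly the cyclic group <f1> *)
  (forall g, gen a b g ->
     (seteq (img g (open_arc (I 0%nat))) (open_arc (I 0%nat)) <->
      exists n : nat, g = fpow n f1 \/ (fun x => fpow n f1 (g x)) = (fun x => x))) /\
  (* ... and f1 has infinite order *)
  (forall n : nat, fpow (S n) f1 <> (fun x => x)).
Proof.
  intros HM HE f1. split.
  - intros g Hg. split.
    + intros Hstab.
      destruct (stabilizer_zpow k comp a b binv HM I I' e HE g Hg Hstab) as [n ->].
      exact (zpow_fpow k comp a b binv HM e n).
    + intros [n Hn]. exact (fpow_f1_stabilizer k comp a b binv HM I I' e HE g n Hn).
  - exact (f1_infinite_order k comp a b binv HM e).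
Qed.
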